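(* Let $A=(A^\bullet,d)$ be a connected, finite-dimensional cdga over $\mathbb{C}$ which has trivial resonance in degree $i$, i.e. $0$ is an isolated point of $\mathcal{R}^i_1(A)$. Then for any finite-dimensional complex Lie algebra $\mathfrak{g}$ and any finite-dimensional representation $\theta\colon\mathfrak{g}\to\mathfrak{gl}(V)$ with $V\ne 0$, the sets $\Pi(A,\theta)$ and $\mathcal{R}^i_1(A,\theta)\cap\mathcal{F}^1(A,\mathfrak{g})$ have the same germ at $0$.
   Context: Connected means $A^0=\mathbb{C}\cdot1$. $\mathcal{F}(A,\mathfrak{g})=\{\omega\in A^1\otimes\mathfrak{g} : d\omega+\tfrac12[\omega,\omega]=0\}$ (for $\omega=\sum_k\eta_k\otimes g_k$: $\sum_k d\eta_k\otimes g_k+\sum_{k<l}\eta_k\eta_l\otimes[g_k,g_l]=0$). For $\omega\in\mathcal{F}(A,\mathfrak{g})$, $d_\omega(a\otimes v)=da\otimes v+\sum_k\eta_ka\otimes\theta(g_k)v$ on $A^\bullet\otimes V$, and $\mathcal{R}^i_r(A,\theta)=\{\omega\in\mathcal{F}(A,\mathfrak{g}):\dim H^i(A\otimes V,d_\omega)\ge r\}$. The rank one version ($\theta=\mathrm{id}_\mathbb{C}$) is denoted $\mathcal{R}^i_r(A)\subseteq\{\eta\in A^1:d\eta=0\}$. $\mathcal{F}^1(A,\mathfrak{g})=\{\eta\otimes g:\eta\in A^1,\ d\eta=0,\ g\in\mathfrak{g}\}$, and $\Pi(A,\theta)=\{\eta\otimes g:d\eta=0,\ \det\theta(g)=0\}$.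 *)

(* Complex numbers are modelled as R[i] for R : realType
   (mathcomp-real-closed's [complex R]); every realType is the field of real
   numbers, so R[i] is the field C. *)
From mathcomp Require Import all_boot all_algebra.
From mathcomp Require Import reals.
From mathcomp.real_closed Require Export complex.
Set Implicit Arguments.
Unset Strict Implicit.
Unset Printing Implicit Defensive.
Import GRing.Theory Num.Theory.
Local Open Scope ring_scope.

(* Finite-dimensional graded vector spaces are presented by a homogeneous   *)
(* basis: the total space is 'rV[C]_n and basis vector j has degree deg j.  *)
Definition homog (C : fieldType) (n : nat) (deg : 'I_n -> nat) (k : nat)
  (x : 'rV[C]_n) : Prop :=
  forall j : 'I_n, deg j <> k -> x 0 j = 0.

Record cdga (C : fieldType) := CDGA {
  cdim : nat;
  cdeg : 'I_cdim -> nat;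
  cmul : 'rV[C]_cdim -> 'rV[C]_cdim -> 'rV[C]_cdim;
  cone : 'rV[C]_cdim;
  cd   : 'rV[C]_cdim -> 'rV[C]_cdim;
  cmul_linl : forall (c : C) a b x, cmul (c *: a + b) x = c *: cmul a x + cmul b x;
  cmul_linr : forall (c : C) x a b, cmul x (c *: a + b) = c *: cmul x a + cmul x b;
  cmulA : forall a b x, cmul a (cmul b x) = cmul (cmul a b) x;
  cmul1l : forall a, cmul cone a = a;
  cmul1r : forall a, cmul a cone = a;
  cone_homog : homog cdeg 0 cone;
  cmul_homog : forall k l a b, homog cdeg k a -> homog cdeg l b ->
                 homog cdeg (k + l) (cmul a b);
  cmulC : forall k l a b, homog cdeg k a -> homog cdeg l b ->
                 cmul a b = (-1) ^+ (k * l) *: cmul b a;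
  cd_lin : forall (c : C) a b, cd (c *: a + b) = c *: cd a + cd b;
  cd_homog : forall k a, homog cdeg k a -> homog cdeg k.+1 (cd a);
  cdd : forall a, cd (cd a) = 0;
  cd_leibniz : forall k a b, homog cdeg k a ->
                 cd (cmul a b) = cmul (cd a) b + (-1) ^+ k *: cmul a (cd b)
}.

Arguments cdeg {C} c0 _ : rename.
Arguments cmul {C} c0 _ _ : rename.
Arguments cone {C} c0 : rename.
Arguments cd {C} c0 _ : rename.

Definition connected (C : fieldType) (A : cdga C) : Prop :=
  forall x, homog (cdeg A) 0 x -> exists c : C, x = c *: cone A.

Record lie_alg (C : fieldType) := LieAlg {
  ldim : nat;
  lbr : 'rV[C]_ldim -> 'rV[C]_ldim -> 'rV[C]_ldim;
  lbr_linl : forall (c : C) x y z, lbr (c *: x + y) z = c *: lbr x z + lbr y z;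
  lbr_linr : forall (c : C) z x y, lbr z (c *: x + y) = c *: lbr z x + lbr z y;
  lbr_alt : forall x, lbr x x = 0;
  lbr_jacobi : forall x y z,
      lbr x (lbr y z) + lbr y (lbr z x) + lbr z (lbr x y) = 0
}.

Arguments lbr {C} l _ _ : rename.

(* A finite-dimensional representation theta : g -> gl(V), V = C^p (column
   vectors), theta(x) acting by left multiplication. *)
Record lie_rep (C : fieldType) (g : lie_alg C) := LieRep {
  rdim : nat;
  rmap : 'rV[C]_(ldim g) -> 'M[C]_rdim;
  rmap_lin : forall (c : C) x y, rmap (c *: x + y) = c *: rmap x + rmap y;
  rmap_br : forall x y, rmap (lbr g x y) = rmap x *m rmap y - rmap y *m rmap x
}.

Arguments rmap {C g} l _.

Section Defs.
Variable C : fieldType.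
Variable A : cdga C.
Local Notation n := (cdim A).

Definition ebas (k : nat) (j : 'I_k) : 'rV[C]_k := delta_mx 0 j.

(* Elements of A (x) g are m x n matrices: eta (x) x  |->  x^T *m eta,
   so that omega = sum_k eta_k (x) e_k with eta_k = row k omega. *)
Definition tensAg (m : nat) (eta : 'rV[C]_n) (x : 'rV[C]_m) : 'M[C]_(m, n) :=
  x^T *m eta.

Definition in_A1g (m : nat) (W : 'M[C]_(m, n)) : Prop :=
  forall k : 'I_m, homog (cdeg A) 1 (row k W).

Definition flat (g : lie_alg C) (W : 'M[C]_(ldim g, n)) : Prop :=
  in_A1g W /\
  \sum_(k < ldim g) tensAg (cd A (row k W)) (ebas k)
  + \sum_(k < ldim g) \sum_(l < ldim g | (k < l)%N)
        tensAg (cmul A (row k W) (row l W)) (lbr g (ebas k) (ebas l)) = 0.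

(* Elements of A (x) V are p x n matrices: a (x) v |-> v *m a.  Given the
   matrices T k = theta(e_k) and omega = sum_k eta_k (x) e_k, the twisted
   differential d_omega(a (x) v) = da (x) v + sum_k eta_k a (x) theta(e_k) v,
   extended linearly. *)
Definition dtw (p m : nat) (T : 'I_m -> 'M[C]_p) (W : 'M[C]_(m, n))
  (X : 'M[C]_(p, n)) : 'M[C]_(p, n) :=
  \sum_(r < n) (col r X *m cd A (ebas r)
     + \sum_(k < m) (T k *m col r X) *m cmul A (row k W) (ebas r)).

Definition projdeg (p : nat) (i : nat) (X : 'M[C]_(p, n)) : 'M[C]_(p, n) :=
  \matrix_(a < p, r < n) (if cdeg A r == i then X a r else 0).

Definition Cdeg (p : nat) (i : nat) : {vspace 'M[C]_(p, n)} :=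
  limg (linfun (@projdeg p i)).

Definition Hdim (p m : nat) (T : 'I_m -> 'M[C]_p) (W : 'M[C]_(m, n))
  (i : nat) : nat :=
  let f := linfun (dtw T W) in
  (\dim (Cdeg p i :&: lker f)
   - \dim (if i is j.+1 then (f @: Cdeg p j)%VS else 0%VS))%N.

Definition theta_mats (g : lie_alg C) (th : lie_rep g) : 'I_(ldim g) -> 'M[C]_(rdim th) :=
  fun k => rmap th (ebas k).

Definition resonance (g : lie_alg C) (th : lie_rep g) (i r : nat)
  (W : 'M[C]_(ldim g, n)) : Prop :=
  flat W /\ (r <= Hdim (theta_mats th) W i)%N.

(* rank one: theta = id_C on g = C (basis e_0 = 1, theta(1) = 1);
   elements eta (x) 1 of A (x) C are identified with eta : 'rV_n = 'M_(1,n).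
   Flatness reduces to eta \in A^1, d eta = 0 (the bracket of C is 0). *)
Definition resonance1 (i r : nat) (eta : 'rV[C]_n) : Prop :=
  homog (cdeg A) 1 eta /\ cd A eta = 0 /\
  (r <= Hdim (fun _ : 'I_1 => (1%R : 'M[C]_1)) eta i)%N.

Definition F1 (g : lie_alg C) (W : 'M[C]_(ldim g, n)) : Prop :=
  exists (eta : 'rV[C]_n) (x : 'rV[C]_(ldim g)),
    homog (cdeg A) 1 eta /\ cd A eta = 0 /\ W = tensAg eta x.

Definition Pi (g : lie_alg C) (th : lie_rep g) (W : 'M[C]_(ldim g, n)) : Prop :=
  exists (eta : 'rV[C]_n) (x : 'rV[C]_(ldim g)),
    homog (cdeg A) 1 eta /\ cd A eta = 0 /\ \det (rmap th x) = 0 /\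
    W = tensAg eta x.

End Defs.

Arguments connected {C} A.
Arguments in_A1g {C} A {m} W.
Arguments flat {C} A {g} W.
Arguments dtw {C} A {p m} T W X.
Arguments Hdim {C} A {p m} T W i.
Arguments resonance {C} A {g} th i r W.
Arguments resonance1 {C} A i r eta.
Arguments F1 {C} A {g} W.
Arguments Pi {C} A {g} th W.

From HB Require Import structures.
From mathcomp Require Import all_boot all_order all_algebra.
From mathcomp Require Import reals.
From mathcomp.real_closed Require Import complex.
Set Implicit Arguments.
Unset Strict Implicit.
Unset Printing Implicit Defensive.
Import Order.TTheory GRing.Theory Num.Theory.
Local Open Scope ring_scope.

(* Write omega = eta (x) x with d eta = 0, so that d_omega = d + eta theta(x).
   Triangularizing theta(x) exhibits (A (x) V, d_omega) as an iterated
   extension of the rank-one complexes (A, d + mu eta), mu running over the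
   eigenvalues of theta(x).  If theta(x) is invertible, every mu is nonzero and
   |mu| is bounded by the size of x, so for small omega the forms mu eta are
   small nonzero degree-1 cocycles; trivial resonance makes their complexes
   exact in degree i, hence so is d_omega.  If theta(x) is singular, left and
   right null vectors of theta(x) transport a nonzero class of H^i(A) (which
   exists as 0 lies in R^i_1(A)) to a nonzero class of H^i(A (x) V, d_omega). *)

Section TwistedDifferential.
Variables (F : fieldType) (n : nat) (D E P Q : 'M[F]_n).
Hypothesis DD : D *m D = 0.
Hypothesis EE : E *m E = 0.
Hypothesis ED : E *m D = - (D *m E).
Hypothesis QEP : Q *m E *m P = Q *m E.

(* With D the matrix of d, E that of multiplication by eta and M = theta(x),
   this is d_omega on A (x) V = 'M_(p, n) for omega = eta (x) x; P and Q
   project onto degrees i and i - 1. *)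
Definition twisted p (M : 'M[F]_p) (X : 'M[F]_(p, n)) := X *m D + M *m X *m E.

Definition twisted_exact p (M : 'M[F]_p) := forall X : 'M[F]_(p, n),
  X *m P = X -> twisted M X = 0 -> exists2 Y, Y *m Q = Y & X = twisted M Y.

Lemma twistedB p (M : 'M[F]_p) X Y : twisted M (X - Y) = twisted M X - twisted M Y.
Proof.
rewrite /twisted !mulmxBl !mulmxBr !mulmxBl opprD !addrA; congr (_ + _).
by rewrite -!addrA; congr (_ + _); rewrite addrC.
Qed.

Lemma twistedK p (M : 'M[F]_p) X : twisted M (twisted M X) = 0.
Proof.
rewrite /twisted !mulmxDl !mulmxDr !mulmxDl -!mulmxA DD EE ED.
by rewrite !mulmx0 add0r addr0 !mulmxN addNr.
Qed.

Lemma twisted_exact_conj p (M U : 'M[F]_p) : U \in unitmx ->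
  twisted_exact (U *m M *m invmx U) -> twisted_exact M.
Proof.
move=> Uu exUM X XP dX.
have twistedU Z : twisted (U *m M *m invmx U) (U *m Z) = U *m twisted M Z.
  by rewrite /twisted mulmxDr !mulmxA mulmxKV.
have XP' : U *m X *m P = U *m X by rewrite -mulmxA XP.
have dUX : twisted (U *m M *m invmx U) (U *m X) = 0 by rewrite twistedU dX mulmx0.
have [Y YQ eY] := exUM _ XP' dUX.
exists (invmx U *m Y); first by rewrite -mulmxA YQ.
by apply: (can_inj (mulKmx Uu)); rewrite -twistedU mulKVmx.
Qed.

(* The complex twisted by a lower triangular N is an iterated extension of
   those twisted by its diagonal entries. *)
Lemma twisted_exact_trig p (N : 'M[F]_p) : is_trig_mx N ->
  (forall mu, \det (N - mu%:M) = 0 -> twisted_exact (mu%:M : 'M[F]_1)) ->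
  twisted_exact N.
Proof.
move=> Ntrig; elim/trigsqmx_ind: p N / Ntrig.
  move=> _ X _ _; exists 0; first by rewrite mul0mx.
  by rewrite [X]flatmx0 [twisted _ _]flatmx0.
move=> p x c N _ IH eig_exact.
have det_block mu : \det (block_mx x 0 c N - mu%:M) = \det (x - mu%:M) * \det (N - mu%:M).
  by rewrite (scalar_mx_block 1 p) opp_block_mx add_block_mx oppr0 addr0 det_lblock.
have exN : twisted_exact N.
  by apply: IH => mu detN; apply: eig_exact; rewrite det_block detN mulr0.
have exx : twisted_exact x.
  rewrite [x]mx11_scalar; apply: eig_exact.
  by rewrite det_block [x in x - _]mx11_scalar subrr det0 mul0r.
have twisted_block (y : 'M[F]_(1, n)) (Y : 'M[F]_(p, n)) :
    twisted (block_mx x 0 c N) (col_mx y Y) =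
    col_mx (twisted x y) (twisted N Y + c *m y *m E).
  rewrite /twisted mul_col_mx mul_block_col !mul0mx addr0 mul_col_mx add_col_mx.
  by congr col_mx; rewrite mulmxDl [c *m y *m E + _]addrC addrA.
move=> X; rewrite -[X]vsubmxK mul_col_mx twisted_block -col_mx0.
move=> /eq_col_mx [x1P X'P] /eq_col_mx [dx1 dX'].
have [y1 y1Q ey1] := exx _ x1P dx1.
pose Z := dsubmx X - c *m y1 *m E.
have ZP : Z *m P = Z.
  by rewrite /Z mulmxBl X'P -y1Q -!mulmxA (mulmxA Q E P) QEP !mulmxA.
have dZ : twisted N Z = 0.
  have dX'E : twisted N (dsubmx X) = - (c *m usubmx X *m E).
    by apply/eqP; rewrite -subr_eq0 opprK dX'.
  rewrite /Z twistedB dX'E ey1 /twisted mulmxDr mulmxDl -!mulmxA EE ED.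
  by rewrite !mulmx0 !addr0 !mulmxN opprK addNr.
have [Y' Y'Q eY'] := exN _ ZP dZ.
exists (col_mx y1 Y'); first by rewrite mul_col_mx y1Q Y'Q.
by rewrite twisted_block -eY' -ey1 subrK.
Qed.

Lemma left_inverse_cV p (v : 'cV[F]_p) : v != 0 -> exists psi : 'rV[F]_p, psi *m v = 1%:M.
Proof.
move=> v_neq0; have /existsP [a va] : [exists a, v a 0 != 0].
  apply: contraNT v_neq0 => /existsPn v0; apply/eqP/matrixP => a j.
  by rewrite ord1 mxE; apply/eqP; move: (v0 a); rewrite negbK.
exists ((v a 0)^-1 *: delta_mx 0 a); rewrite -scalemxAl -rowE.
by apply/matrixP => i j; rewrite !ord1 !mxE eqxx mulr1n mulVf.
Qed.

(* A cocycle z of the untwisted operator is recovered as phi X2 from a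
   cocycle X2 of the M-twisted one, using a left null vector phi and a right
   null vector v of M. *)
Lemma twisted_exact_singular p (M : 'M[F]_p) :
  \det M = 0 -> twisted_exact M -> twisted_exact (0 : 'M[F]_1).
Proof.
move=> detM exM z zP dz.
have twisted0 (y : 'M[F]_(1, n)) : twisted 0 y = y *m D.
  by rewrite /twisted !mul0mx addr0.
move: dz; rewrite twisted0 => dz.
have /det0P [v' v'_neq0 v'M] : \det M^T == 0 by rewrite det_tr detM.
pose v := v'^T.
have Mv : M *m v = 0 by rewrite -[M]trmxK -trmx_mul v'M trmx0.
have [psi psi_v] : exists psi, psi *m v = 1%:M by apply: left_inverse_cV; rewrite trmx_eq0.
have /det0P [phi phi_neq0 phiM] : \det M == 0 by rewrite detM.
have [e' e'_phi] : exists e', e' *m phi^T = 1%:M by apply: left_inverse_cV; rewrite trmx_eq0.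
pose e := e'^T.
have phi_e : phi *m e = 1%:M by rewrite -[phi]trmxK -trmx_mul e'_phi tr_scalar_mx.
have [Y YQ eY] : exists2 Y, Y *m Q = Y & v *m z = twisted M Y.
  apply: exM; first by rewrite -mulmxA zP.
  by rewrite /twisted -(mulmxA v z D) dz mulmx0 add0r (mulmxA M v) Mv !mul0mx.
pose w := psi *m Y.
have ez : z = w *m D + psi *m M *m Y *m E.
  by rewrite -[z]mul1mx -psi_v -(mulmxA psi v z) eY /twisted mulmxDr /w !mulmxA.
have zE : z *m E = w *m D *m E.
  by rewrite {1}ez mulmxDl -(mulmxA _ E E) EE mulmx0 addr0.
have wEP : w *m E *m P = w *m E by rewrite /w -YQ -!mulmxA (mulmxA Q) QEP.
pose X2 := e *m z + M *m e *m (w *m E).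
have [Y2 Y2Q eY2] : exists2 Y2, Y2 *m Q = Y2 & X2 = twisted M Y2.
  apply: exM.
    by rewrite /X2 mulmxDl -(mulmxA e) zP -(mulmxA (M *m e)) wEP.
  rewrite /twisted /X2 mulmxDl mulmxDr mulmxDl -(mulmxA e z D) dz mulmx0 add0r.
  rewrite -(mulmxA (M *m e) (w *m E) D) -(mulmxA w E D) ED.
  have -> : M *m (M *m e *m (w *m E)) *m E = 0 by rewrite -!mulmxA EE !mulmx0.
  have -> : M *m (e *m z) *m E = M *m e *m (z *m E) by rewrite !mulmxA.
  by rewrite addr0 zE !mulmxN -(mulmxA w D E) addNr.
exists (phi *m Y2); first by rewrite -mulmxA Y2Q.
have := congr1 (mulmx phi) eY2.
rewrite /X2 mulmxDr !mulmxA phi_e mul1mx phiM !mul0mx addr0 => ->.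
by rewrite twisted0 /twisted mulmxDr !mulmxA phiM !mul0mx addr0.
Qed.

End TwistedDifferential.

Section CdgaMatrices.
Variables (F : fieldType) (A : cdga F).
Local Notation n := (cdim A).

Definition cd_linear : {linear 'rV[F]_n -> 'rV[F]_n} :=
  HB.pack (cd A) (GRing.isLinear.Build _ _ _ _ _ (@cd_lin F A)).

Lemma cmul_linear_r b : linear (cmul A b).
Proof. by move=> c x y; rewrite cmul_linr. Qed.

Definition cmul_linear b : {linear 'rV[F]_n -> 'rV[F]_n} :=
  HB.pack (cmul A b) (GRing.isLinear.Build _ _ _ _ _ (cmul_linear_r b)).

Definition cd_mx := lin1_mx cd_linear.
Definition cmul_mx b := lin1_mx (cmul_linear b).

Lemma cd_mxE a : cd A a = a *m cd_mx.
Proof. by rewrite mul_rV_lin1. Qed.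

Lemma cmul_mxE b a : cmul A b a = a *m cmul_mx b.
Proof. by rewrite mul_rV_lin1. Qed.

Lemma cd0 : cd A 0 = 0.
Proof. by rewrite cd_mxE mul0mx. Qed.

Lemma cdZ c a : cd A (c *: a) = c *: cd A a.
Proof. by rewrite -[c *: a]addr0 cd_lin cd0 addr0. Qed.

Lemma cmulZr c b a : cmul A b (c *: a) = c *: cmul A b a.
Proof. by rewrite !cmul_mxE scalemxAl. Qed.

Lemma cmul0l a : cmul A 0 a = 0.
Proof.
have := @cmul_linl F A 1 0 0 a; rewrite !scale1r addr0 => cmul0_double.
by rewrite -[LHS](addrK (cmul A 0 a)) -cmul0_double subrr.
Qed.

Lemma cmulZl c b a : cmul A (c *: b) a = c *: cmul A b a.
Proof. by rewrite -[c *: b]addr0 cmul_linl cmul0l addr0. Qed.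

Lemma row_mx_eq k l (M1 M2 : 'M[F]_(k, l)) :
  (forall a : 'rV_k, a *m M1 = a *m M2) -> M1 = M2.
Proof. by move=> eqM; apply/row_matrixP => r; rewrite !rowE eqM. Qed.

Lemma cmul_mxZ c b : cmul_mx (c *: b) = c *: cmul_mx b.
Proof. by apply: row_mx_eq => a; rewrite -scalemxAr -!cmul_mxE cmulZl. Qed.

Lemma cd_mx2 : cd_mx *m cd_mx = 0.
Proof. by apply: row_mx_eq => a; rewrite mulmxA -!cd_mxE cdd mulmx0. Qed.

Lemma homogZ k c (a : 'rV[F]_n) : homog (cdeg A) k a -> homog (cdeg A) k (c *: a).
Proof. by move=> ha j hj; rewrite mxE ha // mulr0. Qed.

Lemma homog_ebas r : homog (cdeg A) (cdeg A r) (ebas F r).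
Proof. by move=> j; rewrite /ebas mxE eqxx; case: (j =P r) => [-> //|]. Qed.

Definition deg_proj k : 'M[F]_n := diag_mx (\row_j ((cdeg A j == k)%:R)).

(* For [i = 0] this is the zero matrix, since no basis vector has degree -1. *)
Definition pred_deg_proj i : 'M[F]_n := diag_mx (\row_j (((cdeg A j).+1 == i)%:R)).

Lemma pred_deg_projS j : pred_deg_proj j.+1 = deg_proj j.
Proof. by apply/matrixP => a r; rewrite !mxE eqSS. Qed.

Lemma pred_deg_proj0 : pred_deg_proj 0 = 0.
Proof. by apply/matrixP => a r; rewrite !mxE; case: (a == r); rewrite ?mulr0n ?mulr1n. Qed.

Lemma deg_projK k : deg_proj k *m deg_proj k = deg_proj k.
Proof.
apply/matrixP => a r; rewrite mul_mx_diag !mxE.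
case: (a =P r) => [->|_]; last by rewrite !mulr0n mul0r.
by case: (cdeg A r == k); rewrite ?mulr1 ?mulr0.
Qed.

Lemma deg_proj_raising i (B : 'M[F]_n) :
  (forall r, homog (cdeg A) (cdeg A r).+1 (ebas F r *m B)) ->
  pred_deg_proj i *m B *m deg_proj i = pred_deg_proj i *m B.
Proof.
move=> homB; apply/matrixP => r j; rewrite mul_mx_diag mul_diag_mx !mxE.
case: (cdeg A j =P i) => [_|ne]; first by rewrite mulr1.
case: ((cdeg A r).+1 =P i) => [er|_]; last by rewrite !mul0r.
have := homB r j; rewrite er => /(_ ne); rewrite -rowE mxE => ->.
by rewrite !mulr0.
Qed.

Lemma pred_deg_proj_cd_mx i :
  pred_deg_proj i *m cd_mx *m deg_proj i = pred_deg_proj i *m cd_mx.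
Proof.
by apply: deg_proj_raising => r; rewrite -cd_mxE; apply: cd_homog; apply: homog_ebas.
Qed.

Section Degree1Cocycle.
Variable eta : 'rV[F]_n.
Hypothesis eta1 : homog (cdeg A) 1 eta.
Hypothesis deta : cd A eta = 0.
Hypothesis char_neq2 : (2%:R : F) != 0.

Lemma pred_deg_proj_cmul_mx i :
  pred_deg_proj i *m cmul_mx eta *m deg_proj i = pred_deg_proj i *m cmul_mx eta.
Proof.
apply: deg_proj_raising => r; rewrite -cmul_mxE.
by have := cmul_homog eta1 (homog_ebas (r := r)); rewrite add1n.
Qed.

Lemma cmul_sqr : cmul A eta eta = 0.
Proof.
have := cmulC eta1 eta1; rewrite expr1 scaleN1r => /eqP.
by rewrite -subr_eq0 opprK -mulr2n -scaler_nat scaler_eq0 (negbTE char_neq2) => /eqP.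
Qed.

Lemma cmul_mx2 : cmul_mx eta *m cmul_mx eta = 0.
Proof.
by apply: row_mx_eq => a; rewrite mulmxA -!cmul_mxE cmulA cmul_sqr cmul0l mulmx0.
Qed.

Lemma cmul_mx_cd_mx : cmul_mx eta *m cd_mx = - (cd_mx *m cmul_mx eta).
Proof.
apply: row_mx_eq => a; rewrite mulmxN !mulmxA -cmul_mxE -!cd_mxE -cmul_mxE.
by rewrite (cd_leibniz _ eta1) deta cmul0l add0r expr1 scaleN1r.
Qed.

End Degree1Cocycle.
End CdgaMatrices.

Section TwistedCohomology.
Variables (F : fieldType) (A : cdga F).
Local Notation n := (cdim A).

Lemma projdegE p k (X : 'M[F]_(p, n)) : @projdeg F A p k X = X *m deg_proj A k.
Proof.
apply/matrixP => a r; rewrite mul_mx_diag !mxE.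
by case: (cdeg A r == k); rewrite ?mulr1 ?mulr0.
Qed.

Lemma projdeg_linear p k : linear (@projdeg F A p k).
Proof. by move=> c X Y; rewrite !projdegE mulmxDl scalemxAl. Qed.

Definition projdeg_lfun p k : {linear 'M[F]_(p, n) -> 'M[F]_(p, n)} :=
  HB.pack (@projdeg F A p k) (GRing.isLinear.Build _ _ _ _ _ (@projdeg_linear p k)).

Lemma memCdeg p k (X : 'M[F]_(p, n)) : (X \in Cdeg A p k) = (X *m deg_proj A k == X).
Proof.
have projdegL Y : linfun (@projdeg F A p k) Y = Y *m deg_proj A k.
  by rewrite (lfunE (projdeg_lfun p k)) /= projdegE.
apply/memv_imgP/eqP => [[Y _ ->]|XP]; first by rewrite projdegL -mulmxA deg_projK.
by exists X; rewrite ?memvf // projdegL.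
Qed.

Variables (p m : nat) (T : 'I_m -> 'M[F]_p) (W : 'M[F]_(m, n)) (i : nat).
Variables (eta : 'rV[F]_n) (M : 'M[F]_p).
Hypothesis eta1 : homog (cdeg A) 1 eta.
Hypothesis deta : cd A eta = 0.
Hypothesis char_neq2 : (2%:R : F) != 0.
Hypothesis dtw_twisted : forall X, dtw A T W X = twisted (cd_mx A) (cmul_mx eta) M X.

Local Notation twistedM := (twisted (cd_mx A) (cmul_mx eta) M).

Lemma dtw_linear : linear (dtw A T W).
Proof.
move=> c X Y; rewrite !dtw_twisted /twisted mulmxDl mulmxDr mulmxDl.
rewrite -!scalemxAl -!scalemxAr -!scalemxAl scalerDr !addrA; congr (_ + _).
by rewrite -!addrA; congr (_ + _); rewrite addrC.
Qed.

Definition dtw_lfun : {linear 'M[F]_(p, n) -> 'M[F]_(p, n)} :=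
  HB.pack (dtw A T W) (GRing.isLinear.Build _ _ _ _ _ dtw_linear).

Let f := linfun (dtw A T W).
Let cocycles := (Cdeg A p i :&: lker f)%VS.
Let coboundaries := if i is j.+1 then (f @: Cdeg A p j)%VS else 0%VS.

Lemma linfun_dtwE X : f X = twistedM X.
Proof. by rewrite /f (lfunE dtw_lfun) /= dtw_twisted. Qed.

Lemma mem_cocycles X :
  (X \in cocycles) = (X *m deg_proj A i == X) && (twistedM X == 0).
Proof. by rewrite memv_cap memCdeg memv_ker linfun_dtwE. Qed.

Lemma mem_coboundariesP X : reflect
  (exists2 Y, Y *m pred_deg_proj A i = Y & X = twistedM Y) (X \in coboundaries).
Proof.
rewrite /coboundaries; case: i => [|j].
  have twisted0 : twistedM 0 = 0 by rewrite /twisted !mul0mx mulmx0 mul0mx addr0.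
  rewrite memv0 pred_deg_proj0; apply: (iffP eqP) => [->|[Y]].
    by exists 0; rewrite ?mulmx0.
  by rewrite mulmx0 => <- ->.
rewrite pred_deg_projS; apply: (iffP memv_imgP) => [[Y]|[Y YP ->]].
  by rewrite memCdeg linfun_dtwE => /eqP YP ->; exists Y.
by exists Y; rewrite ?memCdeg ?YP ?linfun_dtwE.
Qed.

Lemma coboundaries_sub_cocycles : (coboundaries <= cocycles)%VS.
Proof.
apply/subvP => X /mem_coboundariesP [Y YQ ->].
rewrite mem_cocycles twistedK ?cd_mx2 ?cmul_mx2 ?cmul_mx_cd_mx // eqxx andbT.
rewrite /twisted mulmxDl -YQ -!mulmxA (mulmxA _ (cd_mx A)) pred_deg_proj_cd_mx.
by rewrite (mulmxA _ (cmul_mx eta)) pred_deg_proj_cmul_mx // !mulmxA.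
Qed.

Lemma Hdim_eq0P : Hdim A T W i = 0%N <->
  twisted_exact (cd_mx A) (cmul_mx eta) (deg_proj A i) (pred_deg_proj A i) M.
Proof.
rewrite /Hdim -/f -/cocycles -/coboundaries; split=> [/eqP|exM].
  rewrite subn_eq0 => dim_le X XP dX; apply/mem_coboundariesP.
  have -> : coboundaries = cocycles.
    by apply/eqP; rewrite eqEdim coboundaries_sub_cocycles.
  by rewrite mem_cocycles XP dX !eqxx.
apply/eqP; rewrite subn_eq0 dimvS //; apply/subvP => X.
by rewrite mem_cocycles => /andP [/eqP XP /eqP dX]; apply/mem_coboundariesP/exM.
Qed.

End TwistedCohomology.

Lemma mulmx_sum_col_row (F : fieldType) m k l (X : 'M[F]_(m, k)) (Y : 'M[F]_(k, l)) :
  X *m Y = \sum_(r < k) col r X *m row r Y.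
Proof.
apply/matrixP => a j; rewrite !mxE summxE; apply: eq_bigr => r _.
by rewrite !mxE big_ord1 !mxE.
Qed.

Section TensorConnections.
Variables (F : fieldType) (A : cdga F).
Local Notation n := (cdim A).

Lemma dtwE p m (T : 'I_m -> 'M[F]_p) (W : 'M[F]_(m, n)) X :
  dtw A T W X = X *m cd_mx A + \sum_(k < m) T k *m X *m cmul_mx (row k W).
Proof.
rewrite /dtw big_split /=; congr (_ + _).
  by rewrite (mulmx_sum_col_row X); apply: eq_bigr => r _; rewrite rowE -cd_mxE.
rewrite exchange_big /=; apply: eq_bigr => k _.
rewrite (mulmx_sum_col_row (T k *m X)); apply: eq_bigr => r _.
by rewrite [row r (cmul_mx _)]rowE -cmul_mxE /ebas !colE mulmxA.
Qed.

Lemma dtw_rank1 (eta : 'rV[F]_n) mu X :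
  dtw A (fun _ : 'I_1 => 1 : 'M[F]_1) (mu *: eta) X =
  twisted (cd_mx A) (cmul_mx eta) (mu%:M : 'M_1) X.
Proof.
have row0 : row 0 (mu *: eta) = mu *: eta by apply/matrixP => a b; rewrite ord1 mxE.
by rewrite dtwE big_ord1 mul1mx row0 /twisted mul_scalar_mx -scalemxAl cmul_mxZ scalemxAr.
Qed.

Variables (g : lie_alg F) (th : lie_rep g).

Lemma row_tensAg (eta : 'rV[F]_n) (x : 'rV[F]_(ldim g)) k :
  row k (@tensAg F A _ eta x) = x 0 k *: eta.
Proof. by rewrite row_mul; apply/matrixP => a j; rewrite ord1 !mxE big_ord1 !mxE. Qed.

Lemma rmap_linear : linear (rmap th).
Proof. by move=> c x y; rewrite rmap_lin. Qed.

Definition rmap_lfun : {linear 'rV[F]_(ldim g) -> 'M[F]_(rdim th)} :=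
  HB.pack (rmap th) (GRing.isLinear.Build _ _ _ _ _ rmap_linear).

Lemma rmap_sum_coord (x : 'rV[F]_(ldim g)) :
  rmap th x = \sum_k x 0 k *: theta_mats th k.
Proof.
rewrite {1}[x]row_sum_delta; have -> : rmap th = rmap_lfun by [].
by rewrite linear_sum; apply: eq_bigr => k _; rewrite linearZ.
Qed.

Lemma rmap0 : rmap th 0 = 0.
Proof. exact: (linear0 rmap_lfun). Qed.

Lemma dtw_tensAg (eta : 'rV[F]_n) (x : 'rV[F]_(ldim g)) X :
  dtw A (theta_mats th) (@tensAg F A _ eta x) X =
  twisted (cd_mx A) (cmul_mx eta) (rmap th x) X.
Proof.
rewrite dtwE /twisted rmap_sum_coord; congr (_ + _).
rewrite !mulmx_suml; apply: eq_bigr => k _.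
by rewrite row_tensAg cmul_mxZ -scalemxAr -!scalemxAl.
Qed.

Lemma flat_tensAg (eta : 'rV[F]_n) (x : 'rV[F]_(ldim g)) :
  (2%:R : F) != 0 -> homog (cdeg A) 1 eta -> cd A eta = 0 -> flat A (@tensAg F A _ eta x).
Proof.
move=> char_neq2 eta1 deta; split=> [k|]; first by rewrite row_tensAg; apply: homogZ.
rewrite !big1 ?addr0 // => k _.
  rewrite big1 // => l _.
  by rewrite !row_tensAg cmulZl cmulZr cmul_sqr // !scaler0 /tensAg mulmx0.
by rewrite row_tensAg cdZ deta scaler0 /tensAg mulmx0.
Qed.

End TensorConnections.

Lemma Pi_resonance (F : fieldType) (A : cdga F) (g : lie_alg F) (th : lie_rep g) i
    (eta : 'rV[F]_(cdim A)) (x : 'rV[F]_(ldim g)) :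
  (2%:R : F) != 0 -> resonance1 A i 1 0 -> homog (cdeg A) 1 eta -> cd A eta = 0 ->
  \det (rmap th x) = 0 -> (1 <= Hdim A (theta_mats th) (@tensAg F A _ eta x) i)%N.
Proof.
move=> char_neq2 [_ [_ Hdim0_pos]] eta1 deta detx; rewrite lt0n; apply/eqP.
move/(Hdim_eq0P i eta1 deta char_neq2 (dtw_tensAg eta x)) => exM.
have ex0 := twisted_exact_singular (cmul_mx2 eta1 char_neq2) (cmul_mx_cd_mx eta1 deta)
  (pred_deg_proj_cmul_mx eta1 i) detx exM.
have : Hdim A (fun _ : 'I_1 => 1 : 'M[F]_1) (0 *: eta) i = 0%N.
  by apply/(Hdim_eq0P i eta1 deta char_neq2 (dtw_rank1 eta 0)); rewrite raddf0.
by rewrite scale0r => Hdim0; move: Hdim0_pos; rewrite Hdim0.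
Qed.

Lemma det_rmap_eq0 (C : numClosedFieldType) (A : cdga C) (g : lie_alg C)
    (th : lie_rep g) i (eta : 'rV[C]_(cdim A)) (x : 'rV[C]_(ldim g)) :
  homog (cdeg A) 1 eta -> cd A eta = 0 -> (0 < rdim th)%N ->
  (forall mu, \det (rmap th x - mu%:M) = 0 -> mu != 0 ->
     Hdim A (fun _ : 'I_1 => 1 : 'M[C]_1) (mu *: eta) i = 0%N) ->
  (0 < Hdim A (theta_mats th) (@tensAg C A _ eta x) i)%N -> \det (rmap th x) = 0.
Proof.
move=> eta1 deta rdim_gt0 eig_acyclic; apply: contraTeq => detx.
have char_neq2 : (2%:R : C) != 0 by rewrite pnatr_eq0.
have EE := cmul_mx2 eta1 char_neq2; have ED := cmul_mx_cd_mx eta1 deta.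
have QEP := pred_deg_proj_cmul_mx eta1 i.
rewrite -eqn0Ngt; apply/eqP/(Hdim_eq0P i eta1 deta char_neq2 (dtw_tensAg eta x)).
set M := rmap th x in detx *.
have [U /unitarymx_unit Uunit Utrig] := Schur M rdim_gt0.
apply: (twisted_exact_conj Uunit); apply: twisted_exact_trig => //.
  by move: Utrig; rewrite /similar_to /conjmx (pinvmxE Uunit).
move=> mu detUM; have detM : \det (M - mu%:M) = 0.
  have conjU : U *m M *m invmx U - mu%:M = U *m (M - mu%:M) *m invmx U.
    by rewrite mulmxBr mulmxBl scalar_mxC -(mulmxA _ U) (mulmxV Uunit) mulmx1.
  have detU : \det U != 0 by rewrite -unitfE -unitmxE.
  move: detUM; rewrite conjU !det_mulmx det_inv => /eqP.
  by rewrite !mulf_eq0 invr_eq0 (negbTE detU) /= orbF => /eqP.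
apply/(Hdim_eq0P i eta1 deta char_neq2 (dtw_rank1 eta mu))/eig_acyclic => //.
by apply: contra_neq detx => mu0; move: detM; rewrite mu0 raddf0 subr0.
Qed.

Lemma eigenvalue_norm_le (C : numFieldType) p (M : 'M[C]_p) mu :
  \det (M - mu%:M) = 0 -> `|mu| <= \sum_a \sum_b `|M a b|.
Proof.
move/eqP/det0P => [v v_neq0 vM].
have {}vM b : mu * v 0 b = \sum_a v 0 a * M a b.
  have : v *m M = mu *: v by apply/eqP; rewrite -subr_eq0 -mul_mx_scalar -mulmxBr vM.
  by move/(congr1 (fun X : 'rV[C]_p => X 0 b)); rewrite !mxE => <-.
pose S := \sum_b `|v 0 b|.
have S_gt0 : 0 < S.
  rewrite lt0r sumr_ge0 // andbT; apply: contraNN v_neq0 => /eqP S0.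
  apply/eqP/matrixP => i j; rewrite ord1 mxE; apply/eqP; rewrite -normr_eq0.
  by apply/eqP; apply: (psumr_eq0P _ S0).
rewrite -(ler_pM2l S_gt0) exchange_big /= mulr_sumr.
have -> : S * `|mu| = \sum_b `|mu * v 0 b|.
  by rewrite mulr_suml; apply: eq_bigr => b _; rewrite normrM mulrC.
apply: ler_sum => b _; rewrite vM; apply: le_trans (ler_norm_sum _ _ _) _.
rewrite mulr_sumr; apply: ler_sum => a _.
by rewrite normrM ler_wpM2r // /S (bigD1 a) //= lerDl sumr_ge0.
Qed.

Definition rep_norm (C : numFieldType) (g : lie_alg C) (th : lie_rep g) : C :=
  \sum_a \sum_b \sum_k `|theta_mats th k a b|.

Lemma eigenvalue_tensAg_le (C : numFieldType) (A : cdga C) (g : lie_alg C)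
    (th : lie_rep g) (eta : 'rV[C]_(cdim A)) (x : 'rV[C]_(ldim g)) j mu e :
  (forall k, `|@tensAg C A _ eta x k j| <= e) -> \det (rmap th x - mu%:M) = 0 ->
  `|mu * eta 0 j| <= e * rep_norm th.
Proof.
move=> small detM; rewrite normrM.
have tensAgE k : `|@tensAg C A _ eta x k j| = `|x 0 k| * `|eta 0 j|.
  by rewrite !mxE big_ord1 !mxE normrM.
apply: le_trans (ler_wpM2r (normr_ge0 _) (eigenvalue_norm_le detM)) _.
rewrite /rep_norm mulr_suml mulr_sumr; apply: ler_sum => a _.
rewrite mulr_suml mulr_sumr; apply: ler_sum => b _.
have rmap_le : `|rmap th x a b| <= \sum_k `|x 0 k| * `|theta_mats th k a b|.
  rewrite rmap_sum_coord summxE; apply: le_trans (ler_norm_sum _ _ _) _.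
  by apply: ler_sum => k _; rewrite mxE normrM.
apply: le_trans (ler_wpM2r (normr_ge0 _) rmap_le) _.
rewrite mulr_suml mulr_sumr; apply: ler_sum => k _.
by rewrite mulrAC -tensAgE ler_wpM2r.
Qed.

Theorem theorem2p4 (R : realType) (A : cdga R[i]) (i : nat) :
  connected A ->
  (* trivial resonance in degree i: 0 is an isolated point of R^i_1(A) *)
  resonance1 A i 1 0 ->
  (exists eps : R[i], 0 < eps /\
     forall eta : 'rV[R[i]]_(cdim A), resonance1 A i 1 eta ->
       (forall j, `|eta 0 j| < eps) -> eta = 0) ->
  forall (g : lie_alg R[i]) (th : lie_rep g), (0 < rdim th)%N ->
  (* Pi(A,theta) and R^i_1(A,theta) \cap F^1(A,g) have the same germ at 0 *)
  exists eps : R[i], 0 < eps /\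
    forall W : 'M[R[i]]_(ldim g, cdim A),
      (forall k j, `|W k j| < eps) ->
      (Pi A th W <-> resonance A th i 1 W /\ F1 A W).
Proof.
move=> _ res0 [eps0 [eps0_gt0 res_isolated]] g th rdim_gt0.
have char_neq2 : (2%:R : R[i]) != 0 by rewrite pnatr_eq0.
have N_ge0 : 0 <= rep_norm th by do 3!(apply: sumr_ge0 => ? _).
have N1_gt0 : 0 < rep_norm th + 1 by rewrite ltr_wpDl.
pose eps := eps0 / (rep_norm th + 1).
have eps_gt0 : 0 < eps by rewrite divr_gt0.
exists eps; split=> // W W_small.
split=> [[eta [x [eta1 [deta [detx ->]]]]]|[[_ Hpos] [eta [x [eta1 [deta eW]]]]]].
  by split; [split; [exact: flat_tensAg | exact: Pi_resonance] | exists eta, x].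
have [eta0|eta_neq0] := eqVneq eta 0.
  exists eta, 0; do 2!split=> //; split; last by rewrite eW eta0 /tensAg !mulmx0.
  by rewrite rmap0; case: (rdim th) rdim_gt0 => // p _; rewrite det0.
exists eta, x; do 3!split=> //; rewrite eW in Hpos.
apply: det_rmap_eq0 Hpos => // mu detM mu_neq0.
apply/eqP; rewrite -leqn0 leqNgt; apply/negP => Hmu.
suff /eqP : mu *: eta = 0 by rewrite scaler_eq0 (negbTE mu_neq0) (negbTE eta_neq0).
apply: res_isolated => [|j]; first by split; [exact: homogZ | rewrite cdZ deta scaler0].
have tensAg_small k : `|@tensAg _ A _ eta x k j| <= eps by rewrite -eW ltW.
rewrite mxE; apply: le_lt_trans (eigenvalue_tensAg_le tensAg_small detM) _.
have -> : eps0 = eps * (rep_norm th + 1) by rewrite divfK ?lt0r_neq0.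
by rewrite ltr_pM2l // ltrDl ltr01.
Qed.
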